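(* Let $\alpha>0$ and $\tau\ge 0$. Consider the variational problem of minimizing $$\int_0^1\frac{x}{x+\alpha g(x)}\,dx$$ over measurable functions $g:[0,1]\to[0,\infty)$ satisfying $\int_0^1 g(x)\,dx=\tau$. The optimal (minimum) value of this problem is $$\max\left(1-\sqrt{\tfrac{2}{3}\alpha\tau},\ \frac{4}{9}\cdot\frac{1}{\frac12+\alpha\tau}\right).$$ *)

From HB Require Import structures.
From mathcomp Require Import all_boot all_order all_algebra.
From mathcomp Require Import all_classical all_reals all_analysis.
Set Implicit Arguments. Unset Strict Implicit. Unset Printing Implicit Defensive.
Import Order.TTheory GRing.Theory Num.Theory.
Local Open Scope classical_set_scope.
Local Open Scope ring_scope.

(* g : [0,1] -> [0,oo) measurable with \int_0^1 g = tau.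
   g is given as a function R -> R; only its values on [0,1] matter. *)
Definition feasible (R : realType) (tau : R) (g : R -> R) : Prop :=
  measurable_fun `[(0:R)%R, (1:R)%R] g /\
  (forall x : R, 0 <= x <= 1 -> 0 <= g x) /\
  (\int[@lebesgue_measure R]_(x in `[(0:R)%R, (1:R)%R]) (g x)%:E = tau%:E)%E.

Definition objective (R : realType) (alpha : R) (g : R -> R) : \bar R :=
  (\int[@lebesgue_measure R]_(x in `[(0:R)%R, (1:R)%R]) (x / (x + alpha * g x))%:E)%E.

Definition optimal_value (R : realType) (alpha tau : R) : R :=
  Num.max (1 - Num.sqrt (2 / 3 * alpha * tau))
          (4 / 9 * (1 / 2 + alpha * tau)^-1).

From HB Require Import structures.
From mathcomp Require Import all_boot all_order all_algebra.
From mathcomp Require Import all_classical all_reals all_analysis.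
From mathcomp Require Import measurable_realfun ring lra.
Import Order.TTheory GRing.Theory Num.Theory numFieldNormedType.Exports.

(* Lagrangian duality.  For a multiplier c > 0 and h >= 0,
     x / (x + h) + h / c^2 >= 1 - max(0, 1 - sqrt x / c)^2,
   with equality at h = max(0, c sqrt x - x).  Taking h = alpha g(x) and
   integrating over [0, 1] bounds the objective of every feasible g from below
   by the integral of the right-hand side minus alpha tau / c^2.  The bound is
   attained by g_c = max(0, c sqrt x - x) / alpha once c is chosen so that g_c
   has integral tau: with s = sqrt (6 alpha tau), c = sqrt s if s <= 1 (g_c
   vanishes beyond x = c^2) and c = (s^2 + 3) / 4 if s >= 1 (then c >= 1 and
   g_c is supported on all of [0, 1]).
   For tau = 0 the value 1 is only approached, as c -> 0. *)

Set Implicit Arguments. Unset Strict Implicit. Unset Printing Implicit Defensive.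
Local Open Scope ring_scope.
Local Open Scope classical_set_scope.

Section Pointwise.
Context {R : rcfType}.
Implicit Types alpha c h x : R.

Lemma sqrtr_le_sqr x c : 0 <= c -> (Num.sqrt x <= c) = (x <= c ^+ 2).
Proof.
move=> c0; case: (leP 0 x) => x0.
  by rewrite -{1}(ger0_norm c0) -sqrtr_sqr ler_sqrt // sqr_ge0.
by rewrite ltr0_sqrtr // c0 (le_trans (ltW x0)) ?sqr_ge0.
Qed.

Definition lagrange_min c x := 1 - Num.max 0 (1 - Num.sqrt x / c) ^+ 2.

Definition opt_density alpha c x := Num.max 0 (c * Num.sqrt x - x) / alpha.

Lemma lagrange_min_in c x : 0 < c -> 0 <= x -> Num.sqrt x <= c ->
  lagrange_min c x = 2 / c * Num.sqrt x - x / c ^+ 2.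
Proof.
move=> c0 x0 xc; rewrite /lagrange_min max_r; last by rewrite subr_ge0 ler_pdivrMr ?mul1r.
by rewrite -{3}(sqr_sqrtr x0); field; rewrite gt_eqF.
Qed.

Lemma lagrange_min_out c x : 0 < c -> c < Num.sqrt x -> lagrange_min c x = 1.
Proof.
move=> c0 cx; rewrite /lagrange_min max_l ?expr0n ?subr0 //.
by rewrite subr_le0 ler_pdivlMr ?mul1r ?ltW.
Qed.

Lemma lagrange_min_ge0 c x : 0 < c -> 0 <= lagrange_min c x.
Proof.
move=> c0; rewrite subr_ge0 expr_le1 ?le_max ?lexx // ge_max ler01 gerBl.
by rewrite divr_ge0 ?sqrtr_ge0 ?ltW.
Qed.

Lemma lagrange_min_le c x h : 0 < c -> 0 <= x -> 0 <= h ->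
  lagrange_min c x <= x / (x + h) + h / c ^+ 2.
Proof.
move=> c0 x0 h0; have cn0 : c != 0 by rewrite gt_eqF.
have xE := sqr_sqrtr x0.
case: (leP (Num.sqrt x) c) => [xc|cx].
  rewrite lagrange_min_in // -subr_ge0.
  have [xh0|xhn0] := eqVneq (x + h) 0.
    have [-> ->] : x = 0 /\ h = 0 by split; lra.
    by rewrite sqrtr0 !(mul0r, mulr0, addr0, subr0).
  move: xE xhn0; set s := Num.sqrt x => xE xhn0; rewrite -xE in xhn0 *.
  have -> : s ^+ 2 / (s ^+ 2 + h) + h / c ^+ 2 - (2 / c * s - s ^+ 2 / c ^+ 2) =
            (s * c - (s ^+ 2 + h)) ^+ 2 / ((s ^+ 2 + h) * c ^+ 2) by field; rewrite cn0.
  by rewrite divr_ge0 ?sqr_ge0 // mulr_ge0 ?sqr_ge0 //; lra.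
rewrite lagrange_min_out // -subr_ge0.
have c2x : c ^+ 2 < x by rewrite ltNge -(sqrtr_le_sqr x (ltW c0)) -ltNge.
have xh0 : 0 < x + h by have := sqr_ge0 c; lra.
have -> : x / (x + h) + h / c ^+ 2 - 1 = h * (x + h - c ^+ 2) / (c ^+ 2 * (x + h)).
  by field; rewrite cn0 gt_eqF.
by apply: divr_ge0; apply: mulr_ge0; rewrite ?sqr_ge0 //; lra.
Qed.

Lemma opt_density_ge0 alpha c x : 0 < alpha -> 0 <= opt_density alpha c x.
Proof. by move=> a0; rewrite divr_ge0 ?le_max ?lexx // ltW. Qed.

Lemma opt_density_in alpha c x : 0 <= x -> Num.sqrt x <= c ->
  opt_density alpha c x = c / alpha * Num.sqrt x - x / alpha.
Proof.
move=> x0 xc; rewrite /opt_density max_r; first by rewrite mulrBl mulrAC.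
by rewrite -{2}(sqr_sqrtr x0) expr2 -mulrBl mulr_ge0 ?subr_ge0 ?sqrtr_ge0.
Qed.

Lemma opt_density_out alpha c x : 0 <= c -> c < Num.sqrt x -> opt_density alpha c x = 0.
Proof.
move=> c0 cx; have x0 : 0 < x by rewrite -sqrtr_gt0 (le_lt_trans c0).
rewrite /opt_density max_l ?mul0r // -{2}(sqr_sqrtr (ltW x0)) expr2 -mulrBl.
by rewrite mulr_le0_ge0 ?sqrtr_ge0 // subr_le0 ltW.
Qed.

Lemma opt_ratio_in alpha c x : 0 < alpha -> 0 <= x -> Num.sqrt x <= c ->
  x / (x + alpha * opt_density alpha c x) = Num.sqrt x / c.
Proof.
move=> a0 x0 xc; rewrite opt_density_in //.
have := sqr_sqrtr x0; set s := Num.sqrt x => xE; rewrite -xE.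
have [->|sn0] := eqVneq s 0; first by rewrite expr0n /= !(mul0r, mulr0).
have cn0 : c != 0 by rewrite gt_eqF // (lt_le_trans _ xc) // lt_neqAle eq_sym sn0 sqrtr_ge0.
have -> : s ^+ 2 + alpha * (c / alpha * s - s ^+ 2 / alpha) = c * s.
  by field; rewrite gt_eqF.
by field; rewrite sn0 cn0.
Qed.

Lemma opt_ratio_out alpha c x : 0 <= c -> c < Num.sqrt x ->
  x / (x + alpha * opt_density alpha c x) = 1.
Proof.
move=> c0 cx; have x0 : 0 < x by rewrite -sqrtr_gt0 (le_lt_trans c0).
by rewrite opt_density_out // mulr0 addr0 divff ?gt_eqF.
Qed.

End Pointwise.

Section Integrals.
Context {R : realType}.
Local Notation mu := (@lebesgue_measure R).
Implicit Types alpha c x : R.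

(* Pointwise forms of [continuousM], [continuousB], [continuousD], which
   [apply:] unifies with lambda-terms such as the unfolded definitions below. *)
Lemma continuous_mul (f g : R -> R) x : {for x, continuous f} -> {for x, continuous g} ->
  continuous_at x (fun y => f y * g y).
Proof. exact: continuousM. Qed.

Lemma continuous_sub (f g : R -> R) x : {for x, continuous f} -> {for x, continuous g} ->
  continuous_at x (fun y => f y - g y).
Proof. exact: continuousB. Qed.

Lemma continuous_add (f g : R -> R) x : {for x, continuous f} -> {for x, continuous g} ->
  continuous_at x (fun y => f y + g y).
Proof. exact: continuousD. Qed.

Lemma continuous_opt_density alpha c : continuous (opt_density alpha c).
Proof.
move=> x; rewrite /opt_density.
apply: continuous_mul; last exact: cst_continuous.
apply: continuous_max; first exact: cst_continuous.
apply: continuous_sub; last exact: cvg_id.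
by apply: continuous_mul; [exact: cst_continuous | exact: sqrt_continuous].
Qed.

Lemma continuous_lagrange_min c : continuous (lagrange_min c).
Proof.
move=> x; rewrite /lagrange_min.
apply: continuous_sub; first exact: cst_continuous.
apply: continuous_mul; apply: continuous_max; try exact: cst_continuous;
  apply: continuous_sub; try exact: cst_continuous;
  by apply: continuous_mul; [exact: sqrt_continuous | exact: cst_continuous].
Qed.

Lemma measurable_lagrange_min c (D : set R) : measurable_fun D (lagrange_min c).
Proof.
by apply: measurable_funTS; apply: continuous_measurable_fun; exact: continuous_lagrange_min.
Qed.

Lemma measurable_opt_density alpha c (D : set R) : measurable_fun D (opt_density alpha c).
Proof.
by apply: measurable_funTS; apply: continuous_measurable_fun; exact: continuous_opt_density.
Qed.

Lemma measurable_inv : measurable_fun setT (@GRing.inv R).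
Proof.
rewrite -(setUv [set 0]); apply/measurable_funU => //; first exact: measurableC.
split; first exact: measurable_fun_set1.
apply: open_continuous_measurable_fun; first exact: (closed_openC (@closed_eq R 0)).
by move=> x /set_mem /eqP x0; apply: inv_continuous.
Qed.

Lemma measurable_ratio alpha (g : R -> R) (D : set R) :
  measurable_fun D g -> measurable_fun D (fun x => x / (x + alpha * g x)).
Proof.
move=> mg; apply: (@measurable_funM _ _ _ _ id); first exact: measurable_id.
apply: (measurableT_comp measurable_inv).
apply: (@measurable_funD _ _ _ _ id); first exact: measurable_id.
exact: (@measurable_funM _ _ _ _ (fun=> alpha)).
Qed.

Lemma integral_sqrt_linear (p q b : R) : 0 <= b ->
  (\int[mu]_(x in `[0%R, b]) (p * Num.sqrt x + q * x)%:E =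
   (p * (2 / 3) * (b * Num.sqrt b) + q * (b ^+ 2 / 2))%:E)%E.
Proof.
rewrite le_eqVlt => /predU1P[<-|b0].
  by rewrite set_itv1 integral_set1 sqrtr0 expr0n /= !(mul0r, mulr0, addr0).
pose F x := p * (2 / 3) * (x * Num.sqrt x) + q * (x ^+ 2 / 2).
have F'E x : 0 < x -> is_derive x 1 F (p * Num.sqrt x + q * x).
  move=> x0; have := is_derive1_sqrt x0.
  have -> : F = (p * (2 / 3)) \*: (@idfun R * Num.sqrt) + (q / 2) \*: (@idfun R ^+ 2).
    by apply/funext => y; rewrite /F !fctE /= /GRing.scale /=; field.
  move=> sqrt'; apply: is_derive_eq.
  have xE := sqr_sqrtr (ltW x0); have sn0 : Num.sqrt x != 0 by rewrite gt_eqF ?sqrtr_gt0.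
  by move: xE sn0; set s := Num.sqrt x => xE sn0; rewrite /= -xE /GRing.scale /=; field.
have cF : continuous F.
  move=> x; rewrite /F.
  apply: continuous_add; apply: continuous_mul; try exact: cst_continuous.
    by apply: continuous_mul; [exact: cvg_id | exact: sqrt_continuous].
  by apply: continuous_mul; [exact: exprn_continuous | exact: cst_continuous].
rewrite (@continuous_FTC2 _ _ F) //.
- by rewrite /F sqrtr0 expr0n /= !(mul0r, mulr0, addr0) sube0.
- apply: continuous_subspaceT => x.
  apply: continuous_add; apply: continuous_mul; try exact: cst_continuous.
    exact: sqrt_continuous.
  exact: cvg_id.
- split.
  + by move=> x /[!in_itv] /= /andP[x0 _]; have [] := F'E x x0.
  + exact/cvg_at_right_filter/cF.
  + exact/cvg_at_left_filter/cF.
- by move=> x /[!in_itv] /= /andP[x0 _]; rewrite derive1E; have [_ ->] := F'E x x0.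
Qed.

(* On [[0, 1]], [sqrt x <= c] iff [x <= support_end c]. *)
Definition support_end c := Num.min 1 (c ^+ 2).

Lemma integral01_sqrt_piecewise (f : R -> R) (c p q r : R) : 0 <= c ->
  measurable_fun (`[0, 1] : set R) f ->
  (forall x, 0 <= x -> Num.sqrt x <= c -> f x = p * Num.sqrt x + q * x) ->
  (forall x, c < Num.sqrt x -> f x = r) ->
  let b := support_end c in
  (\int[mu]_(x in `[0%R, 1%R]) (f x)%:E =
   (p * (2 / 3) * (b * Num.sqrt b) + q * (b ^+ 2 / 2) + r * (1 - b))%:E)%E.
Proof.
move=> c0 mf f_in f_out b.
have b0 : 0 <= b by rewrite le_min ler01 sqr_ge0.
have b1 : b <= 1 by rewrite ge_min lexx.
have itv01E : `[0%R, 1%R] = `[0%R, b] `|` `]b, 1%R] :> set R.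
  by apply: itv_bndbnd_setU; rewrite bnd_simp.
rewrite itv01E integral_setU //; first last.
- rewrite disj_set2E; apply/eqP/seteqP; split => x //=.
  rewrite !in_itv /= => -[/andP[_ xb] /andP[bx _]].
  by move: (lt_le_trans bx xb); rewrite ltxx.
- by rewrite -itv01E; apply/measurable_EFinP.
have -> : (\int[mu]_(x in `[0%R, b]) (f x)%:E =
           \int[mu]_(x in `[0%R, b]) (p * Num.sqrt x + q * x)%:E)%E.
  apply: eq_integral => x /[!inE] /= /[!in_itv] /= /andP[x0 xb].
  by rewrite f_in // sqrtr_le_sqr // (le_trans xb) // ge_min lexx orbT.
have -> : (\int[mu]_(x in `]b, 1%R]) (f x)%:E = \int[mu]_(x in `]b, 1%R]) r%:E)%E.
  apply: eq_integral => x /[!inE] /= /[!in_itv] /= /andP[bx x1].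
  rewrite f_out // ltNge sqrtr_le_sqr // -ltNge.
  by move: bx; rewrite gt_min ltNge x1 /=.
rewrite integral_sqrt_linear // integral_cst //= lebesgue_measure_itv /= lte_fin.
move: b1; rewrite le_eqVlt => /predU1P[->|b1].
  by rewrite ltxx mule0 adde0 subrr mulr0 addr0.
by rewrite b1 -EFinD.
Qed.

Lemma integral_lagrange_min c : 0 < c -> let b := support_end c in
  (\int[mu]_(x in `[0%R, 1%R]) (lagrange_min c x)%:E =
   (4 / (3 * c) * (b * Num.sqrt b) - b ^+ 2 / (2 * c ^+ 2) + (1 - b))%:E)%E.
Proof.
move=> c0 b; rewrite {}/b.
rewrite (integral01_sqrt_piecewise (c := c) (p := 2 / c) (q := - c ^-2) (r := 1)) ?ltW //.
- by congr (_%:E); field; rewrite gt_eqF.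
- exact: measurable_lagrange_min.
- by move=> x x0 xc; rewrite lagrange_min_in //; ring.
- by move=> x; exact: lagrange_min_out.
Qed.

Lemma feasible_opt_density alpha c tau : 0 < alpha -> 0 <= c ->
  let b := support_end c in tau = (2 / 3 * c * (b * Num.sqrt b) - b ^+ 2 / 2) / alpha ->
  feasible tau (opt_density alpha c).
Proof.
move=> a0 c0 b ->; split; first exact: measurable_opt_density.
split; first by move=> x _; exact: opt_density_ge0.
rewrite {}/b.
rewrite (integral01_sqrt_piecewise (c := c) (p := c / alpha) (q := - alpha^-1) (r := 0)) //.
- by congr (_%:E); ring.
- exact: measurable_opt_density.
- by move=> x x0 xc; rewrite opt_density_in //; ring.
- by move=> x; exact: opt_density_out.
Qed.

Lemma objective_opt_density alpha c : 0 < alpha -> 0 <= c -> let b := support_end c in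
  objective alpha (opt_density alpha c) = (2 / 3 * (b * Num.sqrt b) / c + (1 - b))%:E.
Proof.
move=> a0 c0 b; rewrite {}/b /objective.
rewrite (integral01_sqrt_piecewise (c := c) (p := c^-1) (q := 0) (r := 1)) //.
- by congr (_%:E); ring.
- by apply: measurable_ratio; exact: measurable_opt_density.
- by move=> x x0 xc; rewrite opt_ratio_in // mul0r addr0 mulrC.
- by move=> x; exact: opt_ratio_out.
Qed.

Lemma objective_ge_dual alpha tau g c : 0 < alpha -> feasible tau g -> 0 < c ->
  (\int[mu]_(x in `[0%R, 1%R]) (lagrange_min c x)%:E - (alpha / c ^+ 2 * tau)%:E
    <= objective alpha g)%E.
Proof.
move=> a0 [mg [g0 ig]] c0; set k := alpha / c ^+ 2.
have k0 : 0 <= k by rewrite divr_ge0 ?sqr_ge0 ?ltW.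
have g0' x : `[0%R, 1%R] x -> 0 <= g x by rewrite /= in_itv /= => /g0.
have ratio0 x : `[0%R, 1%R] x -> (0 <= (x / (x + alpha * g x))%:E)%E.
  move=> x01; have /andP[x0 _] : 0 <= x <= 1 by move: x01; rewrite /= in_itv.
  by rewrite lee_fin divr_ge0 // addr_ge0 // mulr_ge0 ?(g0' x x01) // ltW.
have mratio : measurable_fun (`[0, 1] : set R) (fun x => x / (x + alpha * g x)).
  exact: measurable_ratio.
have mkg : measurable_fun (`[0, 1] : set R) (fun x => k * g x).
  exact: (@measurable_funM _ _ _ _ (fun=> k)).
have lagrangianE : (\int[mu]_(x in `[0%R, 1%R]) (x / (x + alpha * g x) + k * g x)%:E =
    objective alpha g + (k * tau)%:E)%E.
  under eq_integral => x _ do rewrite EFinD.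
  rewrite ge0_integralD //; try exact/measurable_EFinP; last first.
    by move=> x x01; rewrite lee_fin mulr_ge0 ?(g0' x x01).
  congr (_ + _)%E; under eq_integral => x _ do rewrite EFinM.
  by rewrite ge0_integralZl_EFin ?ig //; exact/measurable_EFinP.
rewrite leeBlDr // -lagrangianE; apply: ge0_le_integral => //.
- by move=> x _; rewrite lee_fin lagrange_min_ge0.
- by apply/measurable_EFinP; exact: measurable_lagrange_min.
- by apply/measurable_EFinP; exact: measurable_funD.
- move=> x x01; have /andP[x0 _] : 0 <= x <= 1 by move: x01; rewrite /= in_itv.
  rewrite lee_fin (le_trans (lagrange_min_le c0 x0 (mulr_ge0 (ltW a0) (g0' x x01)))) //.
  by rewrite /k mulrAC.
Qed.

Definition is_optimal_value alpha tau v :=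
  (exists g, feasible tau g /\ objective alpha g = v%:E) /\
  (forall g, feasible tau g -> (v%:E <= objective alpha g)%E).

Lemma objective_ge_dual_le1 alpha tau g d : 0 < alpha -> feasible tau g -> 0 < d <= 1 ->
  ((1 - d ^+ 2 / 6 - alpha / d ^+ 2 * tau)%:E <= objective alpha g)%E.
Proof.
move=> a0 fg /andP[d0 d1]; have := objective_ge_dual a0 fg d0; apply: le_trans.
have bE : support_end d = d ^+ 2 by rewrite /support_end min_r // expr_le1 // ltW.
rewrite integral_lagrange_min //= bE sqrtr_sqr (ger0_norm (ltW d0)) -EFinD lee_fin lerD2r.
by rewrite le_eqVlt; apply/predU1P; left; field; rewrite gt_eqF.
Qed.

Lemma is_optimal_value_le1 alpha s : 0 < alpha -> 0 <= s <= 1 ->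
  is_optimal_value alpha (s ^+ 2 / (6 * alpha)) (1 - s / 3).
Proof.
move=> a0 /andP[s0 s1]; have an0 : alpha != 0 by rewrite gt_eqF.
set c := Num.sqrt s; have c0 : 0 <= c := sqrtr_ge0 s; have c2 : c ^+ 2 = s := sqr_sqrtr s0.
have bE : support_end c = s by rewrite /support_end c2 min_r.
split.
  exists (opt_density alpha c); split.
    by apply: feasible_opt_density => //; rewrite bE -/c -c2; field.
  rewrite objective_opt_density // bE -/c; congr (_%:E).
  have [c_eq0|cn0] := eqVneq c 0; last by rewrite -c2; field.
  by rewrite -c2 c_eq0 expr0n /= !(mul0r, mulr0, add0r, subr0).
move=> g fg; have [s_eq0|sn0] := eqVneq s 0.
  (* No multiplier attains the value 1 here: let [d] tend to [0]. *)
  move: fg; rewrite s_eq0 expr0n /= !mul0r subr0 => fg.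
  apply/lee_subgt0Pr => e e0; pose d := Num.min 1 e.
  have d01 : 0 < d <= 1 by rewrite lt_min ltr01 e0 ge_min lexx.
  have de : d <= e by rewrite ge_min lexx orbT.
  have := objective_ge_dual_le1 a0 fg d01; apply: le_trans; rewrite lee_fin mulr0 subr0.
  move: d01 => /andP[d0 d1]; nra.
have c_in01 : 0 < c <= 1 by rewrite sqrtr_gt0 lt_neqAle eq_sym sn0 s0 -sqrtr1 ler_sqrt.
have := objective_ge_dual_le1 a0 fg c_in01; apply: le_trans; rewrite lee_fin c2.
have -> : alpha / s * (s ^+ 2 / (6 * alpha)) = s / 6 by field; rewrite sn0 an0.
lra.
Qed.

Lemma is_optimal_value_ge1 alpha s : 0 < alpha -> 1 <= s ->
  is_optimal_value alpha (s ^+ 2 / (6 * alpha)) (8 / (3 * (s ^+ 2 + 3))).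
Proof.
move=> a0 s1; have an0 : alpha != 0 by rewrite gt_eqF.
have s2_gt0 : 0 < s ^+ 2 + 3 by rewrite ltr_wpDl ?sqr_ge0.
set c := (s ^+ 2 + 3) / 4.
have c1 : 1 <= c by rewrite /c; nra.
have c0 : 0 < c := lt_le_trans ltr01 c1.
have bE : support_end c = 1 by rewrite /support_end min_l // expr2; nra.
split.
  exists (opt_density alpha c); split.
    by apply: feasible_opt_density; rewrite ?ltW // bE sqrtr1 /c; field.
  rewrite (objective_opt_density a0 (ltW c0)) /= bE sqrtr1 /c; congr (_%:E).
  by field; rewrite gt_eqF.
move=> g fg; have := objective_ge_dual a0 fg c0; apply: le_trans.
rewrite integral_lagrange_min //= bE sqrtr1 -EFinB lee_fin le_eqVlt.
by apply/predU1P; left; rewrite /c; field; rewrite an0 gt_eqF.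
Qed.

End Integrals.

Lemma optimal_valueE (R : realType) (alpha tau s : R) :
  0 <= s -> s ^+ 2 = 6 * (alpha * tau) ->
  optimal_value alpha tau = if s <= 1 then 1 - s / 3 else 8 / (3 * (s ^+ 2 + 3)).
Proof.
move=> s0 s2; have atE : alpha * tau = s ^+ 2 / 6 by rewrite s2; field.
have s2_ge0 := sqr_ge0 s; have s2_gt0 : 0 < s ^+ 2 + 3 by lra.
rewrite /optimal_value -mulrA atE (_ : 2 / 3 * (s ^+ 2 / 6) = (s / 3) ^+ 2); last by field.
rewrite sqrtr_sqr ger0_norm ?divr_ge0 //.
rewrite (_ : 4 / 9 * _^-1 = 8 / (3 * (s ^+ 2 + 3))); last first.
  by field; rewrite !gt_eqF //; lra.
have gapE : 8 / (3 * (s ^+ 2 + 3)) - (1 - s / 3) = (s - 1) ^+ 3 / (3 * (s ^+ 2 + 3)).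
  by field; rewrite gt_eqF.
case: leP => s1; [apply: max_l; rewrite -subr_le0 | apply: max_r; rewrite -subr_ge0].
all: rewrite gapE.
- rewrite mulr_le0_ge0 ?invr_ge0 ?mulr_ge0 ?(ltW s2_gt0) //.
  by rewrite exprS mulr_le0_ge0 ?sqr_ge0 // subr_le0.
- apply: divr_ge0; first by rewrite exprn_ge0 // subr_ge0 ltW.
  by rewrite mulr_ge0 // ltW.
Qed.

Local Close Scope classical_set_scope.

Theorem mainTheorem3 (R : realType) (alpha tau : R) :
  0 < alpha -> 0 <= tau ->
  (exists g : R -> R, feasible tau g /\
     objective alpha g = (optimal_value alpha tau)%:E) /\
  (forall g : R -> R, feasible tau g ->
     ((optimal_value alpha tau)%:E <= objective alpha g)%E).
Proof.
move=> a0 t0; have at0 : 0 <= alpha * tau by rewrite mulr_ge0 // ltW.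
pose s := Num.sqrt (6 * (alpha * tau)).
have s0 : 0 <= s := sqrtr_ge0 _.
have s2 : s ^+ 2 = 6 * (alpha * tau) by rewrite sqr_sqrtr // mulr_ge0.
have tauE : tau = s ^+ 2 / (6 * alpha) by rewrite s2; field; rewrite gt_eqF.
suff : is_optimal_value alpha tau (optimal_value alpha tau) by [].
rewrite (optimal_valueE s0 s2) {1}tauE; case: leP => s1.
- by apply: is_optimal_value_le1; rewrite ?s0.
- exact/is_optimal_value_ge1/ltW.
Qed.
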